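(* If $G$ is a connected graph and $n\ge 1$ is an integer, then $$\dim(G)\le \dim_{n\ell}(G\odot K_n)\le n(G).$$
   Context: Graphs are finite, simple and connected; $d(u,v)$ is the shortest-path distance and $n(G)$ the number of vertices. A set $X$ of vertices resolves two vertices $u,v$ if some $x\in X$ satisfies $d(u,x)\neq d(v,x)$. $X$ is a resolving set if it resolves every pair of distinct vertices; the metric dimension $\dim(G)$ is the minimum size of a resolving set. $X$ is a nonlocal resolving set if it resolves every pair of distinct non-adjacent vertices; the nonlocal metric dimension $\dim_{n\ell}$ is the minimum size of a nonlocal resolving set. For $V(G)=\{g_1,\dots,g_{n(G)}\}$, the corona product $G\odot H$ is obtained from the disjoint union of $G$ and $n(G)$ copies $H_1,\dots,H_{n(G)}$ of $H$ by joining $g_i$ to every vertex of $H_i$ for each $i$. *)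

From mathcomp Require Import all_boot.
Set Implicit Arguments. Unset Strict Implicit. Unset Printing Implicit Defensive.

Definition simple_graph (T : finType) (e : rel T) :=
  symmetric e /\ irreflexive e.
Definition connected_graph (T : finType) (e : rel T) :=
  forall x y : T, connect e x y.

Definition walk_of_len (T : finType) (e : rel T) (u v : T) (k : nat) : bool :=
  [exists p : k.-tuple T, path e u p && (last u p == v)].

(* shortest-path distance: least k such that a walk of length k from u to v
   exists (a shortest walk is a shortest path).  In a connected graph such k
   is < #|T|; if none exists the value is #|T| (irrelevant for connected graphs). *)
Definition dist (T : finType) (e : rel T) (u v : T) : nat :=
  find (walk_of_len e u v) (iota 0 #|T|).

Definition resolves (T : finType) (e : rel T) (X : {set T}) (u v : T) : bool :=
  [exists x in X, dist e u x != dist e v x].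

Definition resolving (T : finType) (e : rel T) (X : {set T}) : bool :=
  [forall u, forall v, (u != v) ==> resolves e X u v].

Definition nonlocal_resolving (T : finType) (e : rel T) (X : {set T}) : bool :=
  [forall u, forall v, ((u != v) && ~~ e u v) ==> resolves e X u v].

Definition metric_dim (T : finType) (e : rel T) : nat :=
  #| [arg min_(X < [set: T] | resolving e X) #|X| ] |.

Definition nonlocal_metric_dim (T : finType) (e : rel T) : nat :=
  #| [arg min_(X < [set: T] | nonlocal_resolving e X) #|X| ] |.

Definition complete_graph (n : nat) : rel 'I_n := fun i j => i != j.
Arguments complete_graph n : clear implicits.

(* corona product G ⊙ H: vertices inl g (vertices of G) and inr (g, h)
   (vertex h of the copy H_g attached to g). *)
Definition corona (T U : finType) (e : rel T) (f : rel U) : rel (T + (T * U)) :=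
  fun x y =>
    match x, y with
    | inl a, inl b => e a b
    | inr (a, h), inr (b, k) => (a == b) && f h k
    | inl a, inr (b, _) => a == b
    | inr (a, _), inl b => a == b
    end.

(* The n(G) vertices of G form a nonlocal resolving set of G ⊙ K_n: a vertex of G
   resolves everything from itself, and two non-adjacent pendant vertices lie in
   different copies, so only one of them is adjacent to the root of its copy.
   Conversely, if X nonlocally resolves G ⊙ K_n, the roots of the vertices of X
   resolve G: for u ≠ v in G the pendant vertices u', v' of the first copy are
   non-adjacent, and the distance from u' to a vertex x with root c ∉ {u, v} is
   d(u, c) + 1, or d(u, c) + 2 if x lies in a copy; so a vertex of X separating
   u' from v' has a root separating u from v. *)

From mathcomp Require Import all_boot zify.
Set Implicit Arguments. Unset Strict Implicit.

Section Distance.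
Variables (T : finType) (e : rel T).

Lemma walk_of_lenP u v k :
  reflect (exists2 p : seq T, size p = k & path e u p && (last u p == v))
          (walk_of_len e u v k).
Proof.
apply: (iffP existsP) => [[p Hp]|[p Hs Hp]].
  by exists (val p) => //; exact: size_tuple.
by exists (Tuple (introT eqP Hs)).
Qed.

Lemma dist_min u v k : walk_of_len e u v k -> dist e u v <= k.
Proof.
move=> W; rewrite /dist; case: (ltnP k #|T|) => hk.
  rewrite leqNgt; apply/negP => lt.
  by have := before_find 0 lt; rewrite nth_iota // add0n W.
by apply: leq_trans (find_size _ _) _; rewrite size_iota.
Qed.

(* A shortest walk is a path, hence has fewer than #|T| edges and is found by [dist]. *)
Lemma dist_walk u v : connect e u v -> walk_of_len e u v (dist e u v).
Proof.
move/connectP=> [p pp ->]; case/shortenP: pp => p' pp' up' _.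
have short : size p' < #|T|.
  by have := max_card (mem (u :: p')); rewrite (card_uniqP up').
have W : walk_of_len e u (last u p') (size p').
  by apply/walk_of_lenP; exists p'; rewrite ?pp' ?eqxx.
have found : has (walk_of_len e u (last u p')) (iota 0 #|T|).
  by apply/hasP; exists (size p') => //; rewrite mem_iota.
have := nth_find 0 found; rewrite nth_iota ?add0n //.
by rewrite -[X in _ < X](size_iota 0 #|T|) -has_find.
Qed.

Lemma dist_refl u : dist e u u = 0.
Proof.
apply/eqP; rewrite -leqn0; apply: dist_min.
by apply/walk_of_lenP; exists [::]; rewrite /= ?eqxx.
Qed.

Lemma dist_edge_le u v : e u v -> dist e u v <= 1.
Proof. by move=> euv; apply: dist_min; apply/walk_of_lenP; exists [:: v]; rewrite /= ?euv ?eqxx. Qed.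

Hypothesis e_connected : connected_graph e.

Lemma dist_eq0 u v : (dist e u v == 0) = (u == v).
Proof.
apply/eqP/eqP => [d0|->]; last exact: dist_refl.
have := dist_walk (e_connected u v); rewrite d0.
by case/walk_of_lenP => p /size0nil -> /andP [_ /eqP].
Qed.

Lemma dist_edge u v : e u v -> u != v -> dist e u v = 1.
Proof.
move=> euv; rewrite -dist_eq0; have := dist_edge_le euv.
by case: (dist e u v) => [|[|]].
Qed.

Lemma dist_triangle u v w : dist e u w <= dist e u v + dist e v w.
Proof.
have /walk_of_lenP [p sp /andP [pp /eqP lp]] := dist_walk (e_connected u v).
have /walk_of_lenP [q sq /andP [qq /eqP lq]] := dist_walk (e_connected v w).
apply: dist_min; apply/walk_of_lenP; exists (p ++ q); first by rewrite size_cat sp sq.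
by rewrite cat_path pp lp qq last_cat lp lq eqxx.
Qed.

Lemma dist_lipschitz (f : T -> nat) :
  (forall x y, e x y -> f y <= f x + 1) -> forall u v, f v <= f u + dist e u v.
Proof.
move=> f_lip u v; have /walk_of_lenP [p <- /andP [pp /eqP <-]] := dist_walk (e_connected u v).
elim: p u pp => [|y p IH] x /=; first by rewrite addn0.
by case/andP=> exy /IH; have := f_lip _ _ exy; lia.
Qed.

End Distance.

Lemma dist_homo (T U : finType) (e : rel T) (e' : rel U) (g : T -> U) :
  connected_graph e -> {homo g : x y / e x y >-> e' x y} ->
  forall u v, dist e' (g u) (g v) <= dist e u v.
Proof.
move=> e_connected g_homo u v.
have /walk_of_lenP [p sp /andP [pp /eqP lp]] := dist_walk (e_connected u v).
apply: dist_min; apply/walk_of_lenP; exists (map g p); first by rewrite size_map.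
by rewrite (homo_path g_homo pp) last_map lp eqxx.
Qed.

Section Resolving.
Variables (T : finType) (e : rel T).

Lemma resolvingP (X : {set T}) :
  reflect (forall u v, u != v -> resolves e X u v) (resolving e X).
Proof.
apply: (iffP forallP) => [X_res u v|X_res u]; first by move/forallP: (X_res u) => /(_ v) /implyP.
by apply/forallP => v; apply/implyP; apply: X_res.
Qed.

Lemma nonlocal_resolvingP (X : {set T}) :
  reflect (forall u v, u != v -> ~~ e u v -> resolves e X u v) (nonlocal_resolving e X).
Proof.
apply: (iffP forallP) => [X_res u v uv nuv|X_res u].
  by move/forallP: (X_res u) => /(_ v) /implyP; apply; rewrite uv.
by apply/forallP => v; apply/implyP => /andP [uv nuv]; apply: X_res.
Qed.

Lemma resolvesC (X : {set T}) u v : resolves e X u v = resolves e X v u.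
Proof. by apply/existsP/existsP => -[x /andP [xX d]]; exists x; rewrite xX eq_sym. Qed.

Lemma resolving_nonlocal (X : {set T}) : resolving e X -> nonlocal_resolving e X.
Proof. by move/resolvingP=> X_res; apply/nonlocal_resolvingP => u v uv _; apply: X_res. Qed.

Hypothesis e_connected : connected_graph e.

Lemma resolves_meml (X : {set T}) u v :
  u != v -> u \in X -> resolves e X u v.
Proof.
move=> uv uX; apply/existsP; exists u.
by rewrite uX dist_refl eq_sym dist_eq0 // eq_sym.
Qed.

Lemma resolving_setT : resolving e [set: T].
Proof. by apply/resolvingP => u v uv; apply: resolves_meml; rewrite ?in_setT. Qed.

(* Both dimensions are arg-mins seeded with [set: T]; they are meaningful only
   because [set: T] is resolving in a connected graph. *)
Lemma metric_dim_le (X : {set T}) : resolving e X -> metric_dim e <= #|X|.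
Proof.
move=> X_res; rewrite /metric_dim.
by case: arg_minnP => [|Z _]; [exact: resolving_setT | apply].
Qed.

Lemma nonlocal_metric_dimP :
  exists2 Z, nonlocal_resolving e Z & #|Z| = nonlocal_metric_dim e.
Proof.
rewrite /nonlocal_metric_dim.
case: arg_minnP => [|Z Z_res _]; [exact/resolving_nonlocal/resolving_setT | by exists Z].
Qed.

Lemma nonlocal_metric_dim_le (X : {set T}) :
  nonlocal_resolving e X -> nonlocal_metric_dim e <= #|X|.
Proof.
move=> X_res; rewrite /nonlocal_metric_dim.
by case: arg_minnP => [|Z _]; [exact/resolving_nonlocal/resolving_setT | apply].
Qed.

End Resolving.

Definition corona_root (T U : Type) (x : T + T * U) : T :=
  match x with inl a => a | inr (a, _) => a end.

Definition corona_height (T U : Type) (x : T + T * U) : nat :=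
  if x is inr _ then 1 else 0.

Arguments corona_root {T U} x.

Section Corona.
Variables (T : finType) (e : rel T) (n : nat).
Hypothesis e_connected : connected_graph e.
Local Notation H := (corona e (complete_graph n)).

Lemma corona_connected : connected_graph H.
Proof.
have root_conn x : connect H (inl (corona_root x)) x /\ connect H x (inl (corona_root x)).
  by case: x => [a|[a i]] //=; split; apply: connect1; rewrite /corona eqxx.
have base_conn a b : connect H (inl a) (inl b).
  have /connectP [p pp ->] := e_connected a b.
  by apply/connectP; exists (map inl p); rewrite ?path_map // last_map.
move=> x y; have [_ xr] := root_conn x; have [ry _] := root_conn y.
exact: connect_trans xr (connect_trans (base_conn _ _) ry).
Qed.

Lemma dist_corona_root x : dist H (inl (corona_root x)) x = corona_height x.
Proof.
case: x => [a|[a i]] /=; first exact: dist_refl.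
by apply: (dist_edge corona_connected); rewrite /corona /= ?eqxx.
Qed.

Lemma dist_leaf_root a i : dist H (inr (a, i)) (inl a) = 1.
Proof. by apply: (dist_edge corona_connected); rewrite /corona /= ?eqxx. Qed.

Section FromLeaf.
Variables (a : T) (i : 'I_n).

(* The expected distance from the pendant vertex (a, i): it vanishes at (a, i) and
   grows by at most 1 along edges, hence bounds that distance from below. *)
Definition leaf_potential (x : T + T * 'I_n) : nat :=
  match x with
  | inl b => dist e a b + 1
  | inr (b, _) => if b == a then 0 else dist e a b + 2
  end.

Lemma leaf_potential_lipschitz x y : H x y -> leaf_potential y <= leaf_potential x + 1.
Proof.
case: x => [b|[b j]]; case: y => [b'|[b' j']]; rewrite /corona /=.
- move=> ebb; have := dist_triangle e_connected a b b'; have := dist_edge_le ebb; lia.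
- by move/eqP <-; case: eqP => _; lia.
- by move/eqP <-; case: eqP => [->|_]; rewrite ?dist_refl; lia.
- by case/andP => /eqP <- _; lia.
Qed.

Lemma dist_leaf x : corona_root x != a ->
  dist H (inr (a, i)) x = dist e a (corona_root x) + 1 + corona_height x.
Proof.
move=> xa; apply/eqP; rewrite eqn_leq; apply/andP; split.
  have base : dist H (inl a) (inl (corona_root x)) <= dist e a (corona_root x).
    by apply: dist_homo => // u v; rewrite /corona.
  apply: leq_trans (dist_triangle corona_connected _ (inl a) _) _.
  rewrite dist_leaf_root addnAC addn1 add1n ltnS.
  apply: leq_trans (dist_triangle corona_connected _ (inl (corona_root x)) _) _.
  by rewrite dist_corona_root leq_add2r.
have := dist_lipschitz corona_connected leaf_potential_lipschitz (inr (a, i)) x.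
by case: x xa => [b|[b j]] /= xa; rewrite ?eqxx ?(negbTE xa) /=; lia.
Qed.

End FromLeaf.

Lemma corona_base_nonlocal_resolving : nonlocal_resolving H [set inl g | g : T].
Proof.
have base_mem g : inl g \in ([set inl g | g : T] : {set T + T * 'I_n}) by rewrite imset_f.
apply/nonlocal_resolvingP => -[a|[a k]] y uy nuy.
  exact: (resolves_meml corona_connected uy (base_mem a)).
case: y uy nuy => [b|[b k']] uy nuy.
  by rewrite resolvesC (resolves_meml corona_connected _ (base_mem b)) // eq_sym.
have ba : b != a.
  apply: contraNneq nuy => ba; move: uy; rewrite ba /corona /= eqxx /=.
  by apply: contraNneq => kk; rewrite kk.
apply/existsP; exists (inl a); rewrite base_mem dist_leaf_root /=.
rewrite (dist_leaf _ _ (x := inl a)) /=; last by rewrite eq_sym.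
by rewrite addn0 addn1 eqSS eq_sym dist_eq0.
Qed.

Lemma resolving_corona_root (i : 'I_n) (X : {set T + T * 'I_n}) :
  nonlocal_resolving H X -> resolving e (corona_root @: X).
Proof.
move/nonlocal_resolvingP => X_res; apply/resolvingP => u v uv.
have leaves_uv : inr (u, i) != inr (v, i) :> T + T * 'I_n.
  by apply: contra uv => /eqP [->].
have /existsP [x /andP [xX dx]] : resolves H X (inr (u, i)) (inr (v, i)).
  by apply: X_res leaves_uv _; rewrite /corona /= (negbTE uv).
have root_mem : corona_root x \in corona_root @: X by rewrite imset_f.
have [xu|xu] := eqVneq (corona_root x) u.
  by rewrite -xu in uv *; exact: (resolves_meml e_connected uv root_mem).
have [xv|xv] := eqVneq (corona_root x) v.
  by rewrite resolvesC -xv; exact: (resolves_meml e_connected xu root_mem).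
apply/existsP; exists (corona_root x); rewrite root_mem.
by apply: contra dx; rewrite !dist_leaf // => /eqP ->.
Qed.

End Corona.

Theorem theorem3p3 (T : finType) (e : rel T) (n : nat) :
  simple_graph e -> connected_graph e -> 1 <= n ->
  metric_dim e <= nonlocal_metric_dim (corona e (complete_graph n)) /\
  nonlocal_metric_dim (corona e (complete_graph n)) <= #|T|.
Proof.
(* Distances are defined by walks. *)
move=> _ e_connected n_gt0.
have H_connected := @corona_connected _ _ n e_connected.
have base_res := corona_base_nonlocal_resolving n e_connected.
split.
  have [Z Z_res <-] := nonlocal_metric_dimP H_connected.
  apply: leq_trans (leq_imset_card corona_root Z).
  exact/metric_dim_le/(resolving_corona_root e_connected (Ordinal n_gt0)).
apply: leq_trans (nonlocal_metric_dim_le H_connected base_res) _.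
by rewrite card_imset //; move=> a b [].
Qed.
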